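(* Let $\mathfrak A$ and $\mathcal A$ be Banach algebras with $\mathcal A$ a Banach $\mathfrak A$-module with compatible actions, and suppose $\mathfrak A$ acts trivially on $\mathcal A$ from the left (or from the right). Let $X$ be a commutative Banach $(\mathcal A/\mathcal J)$-$\mathfrak A$-module such that every approximate identity of $\mathcal A/\mathcal J$ is also an approximate identity for $X$ (i.e. $e_i\cdot x\to x$ and $x\cdot e_i\to x$ for all $x\in X$). If $\mathcal A$ is $\mathfrak A$-module pseudo-amenable, then: (i) every continuous module derivation $D:\mathcal A/\mathcal J\to X$ is approximately inner; (ii) every continuous module derivation $D:\mathcal A/\mathcal J\to X^*$ is $w^*$-approximately inner, i.e. there is a net $(\xi_j)\subseteq X^*$ with $D(u)=w^*\text{-}\lim_j(u\cdot\xi_j-\xi_j\cdot u)$ for all $u\in\mathcal A/\mathcal J$.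
   Context: $\mathcal A$ is a Banach $\mathfrak A$-module with compatible actions: $\alpha\cdot(ab)=(\alpha\cdot a)b$, $(ab)\cdot\alpha=a(b\cdot\alpha)$. $\mathfrak A$ acts trivially on $\mathcal A$ from the left (right) if there is a continuous linear functional $f$ on $\mathfrak A$ with $\alpha\cdot a=f(\alpha)a$ (resp. $a\cdot\alpha=f(\alpha)a$) for all $\alpha,a$. $\mathcal J$ is the closed ideal of $\mathcal A$ generated by $\{(a\cdot\alpha)b-a(\alpha\cdot b):a,b\in\mathcal A,\alpha\in\mathfrak A\}$; $\mathcal A/\mathcal J$ is a Banach algebra and $\mathfrak A$-module. For a Banach algebra $\mathcal B$ that is a Banach $\mathfrak A$-module with compatible actions, a Banach $\mathcal B$-$\mathfrak A$-module is a Banach $\mathcal B$-bimodule and $\mathfrak A$-bimodule $X$ with $\alpha\cdot(b\cdot x)=(\alpha\cdot b)\cdot x$, $b\cdot(\alpha\cdot x)=(b\cdot\alpha)\cdot x$, $b\cdot(x\cdot\alpha)=(b\cdot x)\cdot\alpha$ and analogous right-hand identities; commutative if $\alpha\cdot x=x\cdot\alpha$. A module derivation $D:\mathcal B\to X$ is bounded linear with $D(bc)=D(b)\cdot c+b\cdot D(c)$, $D(\alpha\cdot b)=\alpha\cdot D(b)$, $D(b\cdot\alpha)=D(b)\cdot\alpha$; approximately inner if $D(b)=\lim_j(b\cdot x_j-x_j\cdot b)$ in norm for some net $(x_j)\subseteq X$. With $\mathcal I$ the closed span of $\{a\cdot\alpha\otimes b-a\otimes\alpha\cdot b\}$ in $\mathcal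 A\widehat\otimes\mathcal A$, $\mathcal A\widehat\otimes_{\mathfrak A}\mathcal A=(\mathcal A\widehat\otimes\mathcal A)/\mathcal I$ and $\widetilde\omega_{\mathcal A}(a\otimes b+\mathcal I)=ab+\mathcal J$, $\mathcal A$ is module pseudo-amenable if there is a net $(\widetilde u_j)\subseteq\mathcal A\widehat\otimes_{\mathfrak A}\mathcal A$ with $(\widetilde\omega_{\mathcal A}(\widetilde u_j))$ an approximate identity of $\mathcal A/\mathcal J$ and $a\cdot\widetilde u_j-\widetilde u_j\cdot a\to0$ for all $a\in\mathcal A$. *)

From HB Require Import structures.
From mathcomp Require Import all_boot all_order all_algebra.
From mathcomp Require Import all_classical all_reals all_analysis.
Set Implicit Arguments. Unset Strict Implicit. Unset Printing Implicit Defensive.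
Import Order.TTheory GRing.Theory Num.Theory.
Import numFieldNormedType.Exports.
Local Open Scope classical_set_scope.
Local Open Scope ring_scope.

Section Defs.
Variable K : numFieldType.

Definition directed (I : Type) (le : I -> I -> Prop) : Prop :=
  (exists i : I, True) /\ (forall i, le i i) /\
  (forall i j k, le i j -> le j k -> le i k) /\
  (forall i j, exists k, le i k /\ le j k).

Definition net_cvg (V : normedZmodType K) (I : Type) (le : I -> I -> Prop)
  (x : I -> V) (l : V) : Prop :=
  forall eps : K, 0 < eps -> exists i0, forall i, le i0 i -> `|x i - l| < eps.

Definition linear_map (U V : lmodType K) (f : U -> V) : Prop :=
  forall (c : K) x y, f (c *: x + y) = c *: f x + f y.

Definition linear_cont (U V : normedModType K) (f : U -> V) : Prop :=
  linear_map f /\ continuous f.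

Definition bounded_bilinear (U V W : normedModType K) (m : U -> V -> W) : Prop :=
  (forall x, linear_map (m x)) /\ (forall y, linear_map (fun x => m x y)) /\
  exists C : K, forall x y, `|m x y| <= C * `|x| * `|y|.

Definition banach_algebra (B : completeNormedModType K) (mul : B -> B -> B) : Prop :=
  bounded_bilinear mul /\ (forall a b c, mul a (mul b c) = mul (mul a b) c) /\
  (forall a b, `|mul a b| <= `|a| * `|b|).

Definition banach_bimodule (B X : completeNormedModType K) (mul : B -> B -> B)
  (l : B -> X -> X) (r : X -> B -> X) : Prop :=
  bounded_bilinear l /\ bounded_bilinear r /\
  (forall a b x, l (mul a b) x = l a (l b x)) /\
  (forall a b x, r x (mul a b) = r (r x a) b) /\
  (forall a b x, r (l a x) b = l a (r x b)).

(* A is a Banach U-module (U = frak A) with compatible actions *)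
Definition compatible_module (U A : completeNormedModType K)
  (mulU : U -> U -> U) (mulA : A -> A -> A) (aL : U -> A -> A) (aR : A -> U -> A) : Prop :=
  banach_bimodule mulU aL aR /\
  (forall al a b, aL al (mulA a b) = mulA (aL al a) b) /\
  (forall al a b, aR (mulA a b) al = mulA a (aR b al)).

Definition trivial_left (U A : completeNormedModType K) (aL : U -> A -> A) : Prop :=
  exists f : U -> K^o, linear_cont f /\ forall al a, aL al a = f al *: a.
Definition trivial_right (U A : completeNormedModType K) (aR : A -> U -> A) : Prop :=
  exists f : U -> K^o, linear_cont f /\ forall al a, aR a al = f al *: a.

Definition banach_BU_module (U B X : completeNormedModType K)
  (mulU : U -> U -> U) (mulB : B -> B -> B) (bL : U -> B -> B) (bR : B -> U -> B)
  (xL : B -> X -> X) (xR : X -> B -> X) (yL : U -> X -> X) (yR : X -> U -> X) : Prop :=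
  banach_bimodule mulB xL xR /\ banach_bimodule mulU yL yR /\
  (forall al b x, yL al (xL b x) = xL (bL al b) x) /\
  (forall al b x, xL b (yL al x) = xL (bR b al) x) /\
  (forall al b x, xL b (yR x al) = yR (xL b x) al) /\
  (forall al b x, yR (xR x b) al = xR x (bR b al)) /\
  (forall al b x, xR (yR x al) b = xR x (bL al b)) /\
  (forall al b x, xR (yL al x) b = yL al (xR x b)).

Definition subspace (V : lmodType K) (P : set V) : Prop :=
  P 0 /\ forall (c : K) x y, P x -> P y -> P (c *: x + y).

Definition closed_ideal (A : completeNormedModType K) (mul : A -> A -> A) (P : set A) : Prop :=
  subspace P /\ closed P /\ (forall a x, P x -> P (mul a x) /\ P (mul x a)).

Definition gen_closed_ideal (A : completeNormedModType K) (mul : A -> A -> A) (S : set A) : set A :=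
  fun a => forall P : set A, closed_ideal mul P -> S `<=` P -> P a.

Definition closed_span (V : normedModType K) (S : set V) : set V :=
  fun v => forall P : set V, subspace P -> closed P -> S `<=` P -> P v.

(* J = closed ideal generated by {(a.al)b - a(al.b)} *)
Definition module_ideal (U A : completeNormedModType K) (mulA : A -> A -> A)
  (aL : U -> A -> A) (aR : A -> U -> A) : set A :=
  gen_closed_ideal mulA [set x | exists a b al, x = mulA (aR a al) b - mulA a (aL al b)].

(* pi : V -> Q is (up to isometric isomorphism) the quotient map V -> V/N *)
Definition is_quotient_map (V Q : normedModType K) (pi : V -> Q) (N : set V) : Prop :=
  linear_map pi /\ (forall y, exists v, pi v = y) /\
  (forall v, pi v = 0 <-> N v) /\
  (forall v n, N n -> `|pi v| <= `|v - n|) /\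
  (forall v eps, 0 < eps -> exists n, N n /\ `|v - n| < `|pi v| + eps).

(** ** Projective tensor product (characterised by its universal property) *)
Definition is_proj_tensor (A B T : completeNormedModType K) (tens : A -> B -> T) : Prop :=
  bounded_bilinear tens /\ (forall a b, `|tens a b| <= `|a| * `|b|) /\
  forall (E : completeNormedModType K) (phi : A -> B -> E) (C : K),
    (forall a, linear_map (phi a)) -> (forall b, linear_map (fun a => phi a b)) ->
    (forall a b, `|phi a b| <= C * `|a| * `|b|) ->
    exists f : T -> E, linear_cont f /\ (forall a b, f (tens a b) = phi a b) /\
      (forall t, `|f t| <= C * `|t|) /\
      (forall g : T -> E, linear_cont g -> (forall a b, g (tens a b) = phi a b) -> g = f).

Definition approx_identity (B : completeNormedModType K) (mul : B -> B -> B)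
  (I : Type) (le : I -> I -> Prop) (e : I -> B) : Prop :=
  forall u, net_cvg le (fun i => mul (e i) u) u /\ net_cvg le (fun i => mul u (e i)) u.

(** Q with pi : A -> Q is A/J (mulQ its product).  T (with tens) is A \hat\otimes A,
   M (with q : T -> M) is A \hat\otimes_U A = T / I, lM, rM are the A-actions on M,
   om is \tilde\omega_A. *)
Definition module_pseudo_amenable (U A Q : completeNormedModType K)
  (mulA : A -> A -> A) (aL : U -> A -> A) (aR : A -> U -> A)
  (pi : A -> Q) (mulQ : Q -> Q -> Q) : Prop :=
  exists (T : completeNormedModType K) (tens : A -> A -> T)
         (M : completeNormedModType K) (q : T -> M)
         (lM : A -> M -> M) (rM : A -> M -> M) (om : M -> Q),
    is_proj_tensor tens /\
    is_quotient_map q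
      (closed_span [set t | exists a b al, t = tens (aR a al) b - tens a (aL al b)]) /\
    (forall a, linear_cont (lM a)) /\ (forall a, linear_cont (rM a)) /\
    (forall a b c, lM a (q (tens b c)) = q (tens (mulA a b) c)) /\
    (forall a b c, rM a (q (tens b c)) = q (tens b (mulA c a))) /\
    linear_cont om /\ (forall a b, om (q (tens a b)) = pi (mulA a b)) /\
    exists (I : Type) (le : I -> I -> Prop) (u : I -> M),
      directed le /\ approx_identity mulQ le (fun j => om (u j)) /\
      forall a, net_cvg le (fun j => lM a (u j) - rM a (u j)) 0.

Definition module_derivation (U B X : completeNormedModType K)
  (mulB : B -> B -> B) (bL : U -> B -> B) (bR : B -> U -> B)
  (xL : B -> X -> X) (xR : X -> B -> X) (yL : U -> X -> X) (yR : X -> U -> X)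
  (D : B -> X) : Prop :=
  linear_cont D /\
  (forall u v, D (mulB u v) = xR (D u) v + xL u (D v)) /\
  (forall al u, D (bL al u) = yL al (D u)) /\
  (forall al u, D (bR u al) = yR (D u) al).

Definition approx_inner (B X : completeNormedModType K)
  (xL : B -> X -> X) (xR : X -> B -> X) (D : B -> X) : Prop :=
  exists (I : Type) (le : I -> I -> Prop) (x : I -> X),
    directed le /\ forall u, net_cvg le (fun j => xL u (x j) - xR (x j) u) (D u).

(* Derivations into the dual X^* : an element of X^* is a continuous linear
   functional X -> K; the dual actions are (u.xi)(x) = xi(x.u), (xi.u)(x) = xi(u.x),
   and likewise for U.  D : B -> X^* is represented as D : B -> X -> K. *)
Definition dual_module_derivation (U B X : completeNormedModType K)
  (mulB : B -> B -> B) (bL : U -> B -> B) (bR : B -> U -> B)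
  (xL : B -> X -> X) (xR : X -> B -> X) (yL : U -> X -> X) (yR : X -> U -> X)
  (D : B -> X -> K^o) : Prop :=
  (forall u, linear_cont (D u)) /\
  (forall (c : K) u v x, D (c *: u + v) x = c * D u x + D v x) /\
  (exists C : K, forall u x, `|D u x| <= C * `|u| * `|x|) /\
  (forall u v x, D (mulB u v) x = D u (xL v x) + D v (xR x u)) /\
  (forall al u x, D (bL al u) x = D u (yR x al)) /\
  (forall al u x, D (bR u al) x = D u (yL al x)).

Definition wstar_approx_inner (B X : completeNormedModType K)
  (xL : B -> X -> X) (xR : X -> B -> X) (D : B -> X -> K^o) : Prop :=
  exists (I : Type) (le : I -> I -> Prop) (xi : I -> X -> K^o),
    directed le /\ (forall j, linear_cont (xi j)) /\
    forall u x, net_cvg le (fun j => xi j (xR x u) - xi j (xL u x)) (D u x).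

End Defs.

From HB Require Import structures.
From mathcomp Require Import all_boot all_order all_algebra.
From mathcomp Require Import all_classical all_reals all_analysis.
From mathcomp Require Import ring.
Import Order.TTheory GRing.Theory Num.Theory.
Import numFieldNormedType.Exports.
Local Open Scope classical_set_scope.
Local Open Scope ring_scope.
Set Implicit Arguments. Unset Strict Implicit.

(* Pseudo-amenability yields a net (u_j) in A (x)_U A with a.u_j - u_j.a -> 0
   and (om u_j) an approximate identity of A/J.  For a module derivation D the
   form (b, c) |-> pi b . D (pi c) is balanced over U, hence induces a bounded
   linear map G on A (x)_U A, and the derivation rule gives
     pi a . G m - G m . pi a = G (a.m - m.a) + om m . D (pi a).
   So x_j := G u_j satisfies pi a . x_j - x_j . pi a -> D (pi a), since om u_j
   is an approximate identity for X.  For D : A/J -> X^* the same argument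
   applies to the scalar forms (b, c) |-> D (pi c) (x . pi b), x in X, whose
   induced functionals on A (x)_U A, evaluated at u_j, give xi_j. *)

Section LinearMap.
Variables (K : numFieldType) (V W : lmodType K) (f : V -> W).
Hypothesis f_lin : linear_map f.

Definition linear_of_map : {linear V -> W} :=
  HB.pack f (GRing.isLinear.Build _ _ _ _ f f_lin).

Lemma linear_map0 : f 0 = 0. Proof. exact: (linear0 linear_of_map). Qed.
Lemma linear_mapD x y : f (x + y) = f x + f y. Proof. exact: (linearD linear_of_map). Qed.
Lemma linear_mapB x y : f (x - y) = f x - f y. Proof. exact: (linearB linear_of_map). Qed.
Lemma linear_mapZ c x : f (c *: x) = c *: f x.
Proof. by rewrite -[c *: x]addr0 f_lin linear_map0 addr0. Qed.

Lemma linear_map_neq0 x : f x != 0 -> x != 0.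
Proof. by apply: contraNneq => ->; rewrite linear_map0. Qed.

End LinearMap.

Section LinearCont.
Variable K : numFieldType.

Lemma linear_cont_bounded (V W : normedModType K) (f : V -> W) :
  linear_cont f -> exists2 C, 0 < C & forall x, `|f x| <= C * `|x|.
Proof.
move=> [f_lin f_cont].
have /linear_boundedP/pinfty_ex_gt0 [C C_gt0 fC] :=
  @continuous_linear_bounded K V W 0 (linear_of_map f_lin) (f_cont 0).
by exists C.
Qed.

Lemma bounded_linear_cont (V W : normedModType K) (f : V -> W) (C : K) :
  linear_map f -> 0 <= C -> (forall x, `|f x| <= C * `|x|) -> linear_cont f.
Proof.
move=> f_lin C_ge0 fC; split => //.
apply: (@bounded_linear_continuous K V W (linear_of_map f_lin)).
apply/linear_boundedP; near=> r => x.
apply: le_trans (fC x) _; apply: ler_wpM2r => //.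
near: r; apply: nbhs_pinfty_ge; exact: ger0_real.
Unshelve. all: by end_near.
Qed.

Lemma linear_cont_comp (V W Z : normedModType K) (f : V -> W) (g : W -> Z) :
  linear_cont f -> linear_cont g -> linear_cont (fun x => g (f x)).
Proof.
move=> [f_lin f_cont] [g_lin g_cont]; split.
  by move=> c x y; rewrite f_lin g_lin.
by move=> x; apply: continuous_comp; [exact: f_cont | exact: g_cont].
Qed.

Lemma linear_contD (V W : normedModType K) (f g : V -> W) :
  linear_cont f -> linear_cont g -> linear_cont (fun x => f x + g x).
Proof.
move=> [f_lin f_cont] [g_lin g_cont]; split.
  by move=> c x y; rewrite f_lin g_lin scalerDr addrACA.
by move=> x; apply: continuousD; [exact: f_cont | exact: g_cont].
Qed.

Lemma linear_contB (V W : normedModType K) (f g : V -> W) :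
  linear_cont f -> linear_cont g -> linear_cont (fun x => f x - g x).
Proof.
move=> [f_lin f_cont] [g_lin g_cont]; split.
  by move=> c x y; rewrite f_lin g_lin scalerBr opprD addrACA.
by move=> x; apply: continuousB; [exact: f_cont | exact: g_cont].
Qed.

Lemma linear_contZ (V W : normedModType K) (f : V -> W) (k : K) :
  linear_cont f -> linear_cont (fun x => k *: f x).
Proof.
move=> [f_lin f_cont]; split.
  by move=> c x y; rewrite f_lin scalerDr !scalerA mulrC.
by move=> x; apply: continuous_comp; [exact: f_cont | exact: scaler_continuous].
Qed.

Lemma linear_cont_scalev (W : normedModType K) (x0 : W) : linear_cont (fun k : K^o => k *: x0).
Proof.
split; first by move=> c k l; rewrite scalerDl scalerA.
exact: scalel_continuous.
Qed.

Lemma bounded_bilinear_bound (V W E : normedModType K) (m : V -> W -> E) :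
  bounded_bilinear m -> exists2 C, 0 <= C & forall x y, `|m x y| <= C * `|x| * `|y|.
Proof.
move=> [_ [_ [C mC]]]; have [C_ge0 | C_lt0] := boolP (0 <= C); first by exists C.
exists 0 => // x y; rewrite !mul0r.
have := mC x y; rewrite -mulrA.
have : 0 <= `|x| * `|y| by rewrite mulr_ge0.
rewrite le0r => /orP [/eqP -> | xy_gt0]; first by rewrite mulr0.
by move=> mxy; case/negP: C_lt0; rewrite -(pmulr_lge0 _ xy_gt0); apply: le_trans mxy.
Qed.

Lemma bounded_bilinear_contl (V W E : normedModType K) (m : V -> W -> E) x :
  bounded_bilinear m -> linear_cont (m x).
Proof.
move=> m_bil; have [C C_ge0 mC] := bounded_bilinear_bound m_bil.
by apply: (@bounded_linear_cont _ _ _ (C * `|x|)); [exact: m_bil.1 | rewrite mulr_ge0 |].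
Qed.

Lemma bounded_bilinear_contr (V W E : normedModType K) (m : V -> W -> E) y :
  bounded_bilinear m -> linear_cont (fun x => m x y).
Proof.
move=> m_bil; have [C C_ge0 mC] := bounded_bilinear_bound m_bil.
apply: (@bounded_linear_cont _ _ _ (C * `|y|)); [exact: m_bil.2.1 | by rewrite mulr_ge0 |].
by move=> x; rewrite mulrAC.
Qed.

Lemma closed_kernel (V W : normedModType K) (f : V -> W) :
  continuous f -> closed [set x | f x = 0].
Proof.
move=> f_cont; apply: (@preimage_closed _ _ f [set 0]); first by move=> x _; exact: f_cont.
by apply: accessible_closed_set1; exact: hausdorff_accessible.
Qed.

End LinearCont.

Lemma net_cvg_dominated (K : numFieldType) (V W E : normedModType K)
  (I : Type) (le : I -> I -> Prop) (a : I -> V) (b : I -> W) (lb : W)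
  (g : I -> E) (l : E) (C C' : K) :
  directed le -> 0 <= C -> 0 <= C' -> net_cvg le a 0 -> net_cvg le b lb ->
  (forall j, `|g j - l| <= C * `|a j| + C' * `|b j - lb|) -> net_cvg le g l.
Proof.
move=> [_ [_ [le_trans' le_dir]]] C_ge0 C'_ge0 a0 blb gab eps eps_gt0.
have eps2_gt0 : 0 < eps / 2 by rewrite divr_gt0.
have C1_gt0 : 0 < C + 1 by rewrite ltr_wpDl.
have C'1_gt0 : 0 < C' + 1 by rewrite ltr_wpDl.
have [i1 a_small] := a0 (eps / 2 / (C + 1)) (divr_gt0 eps2_gt0 C1_gt0).
have [i2 b_close] := blb (eps / 2 / (C' + 1)) (divr_gt0 eps2_gt0 C'1_gt0).
have [k [i1k i2k]] := le_dir i1 i2.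
exists k => i ki; apply: le_lt_trans (gab i) _.
rewrite [eps in _ < eps]splitr; apply: ler_ltD.
- have := a_small i (le_trans' _ _ _ i1k ki); rewrite subr0 => /ltW ai.
  apply: le_trans (ler_wpM2l C_ge0 ai) _.
  by rewrite mulrCA ler_piMr ?ltW // ltr_pdivrMr // mul1r ltrDl.
- have := b_close i (le_trans' _ _ _ i2k ki) => bi.
  apply: le_lt_trans (ler_wpM2l C'_ge0 (ltW bi)) _.
  by rewrite mulrCA gtr_pMr // ltr_pdivrMr // mul1r ltrDl.
Qed.

Lemma closed_span0 (K : numFieldType) (V : normedModType K) (S : set V) : closed_span S 0.
Proof. by move=> P [P0 _]. Qed.

Lemma module_ideal0 (K : numFieldType) (U A : completeNormedModType K)
  (mulA : A -> A -> A) (aL : U -> A -> A) (aR : A -> U -> A) : module_ideal mulA aL aR 0.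
Proof. by move=> P [[P0 _] _]. Qed.

Section QuotientMap.
Variables (K : numFieldType) (V Q : normedModType K) (pi : V -> Q) (N : set V).
Hypotheses (pi_quot : is_quotient_map pi N) (N0 : N 0).

Lemma quotient_map_contraction v : `|pi v| <= `|v|.
Proof. by have [_ [_ [_ [piN _]]]] := pi_quot; have := piN v 0 N0; rewrite subr0. Qed.

Lemma quotient_map_cont : linear_cont pi.
Proof.
apply: (@bounded_linear_cont _ _ _ _ 1) => // [|v]; first exact: pi_quot.1.
by rewrite mul1r; exact: quotient_map_contraction.
Qed.

End QuotientMap.

Section BalancedFactorization.
Variables (K : numFieldType) (U A T M : completeNormedModType K).
Variables (aL : U -> A -> A) (aR : A -> U -> A) (tens : A -> A -> T) (q : T -> M).
Hypothesis tens_proj : is_proj_tensor tens.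
Hypothesis q_quot : is_quotient_map q
  (closed_span [set t | exists a b al, t = tens (aR a al) b - tens a (aL al b)]).

Definition balanced (E : Type) (phi : A -> A -> E) :=
  forall a b al, phi (aR a al) b = phi a (aL al b).

Lemma balanced_factor (E : completeNormedModType K) (phi : A -> A -> E) (C : K) :
  (forall a, linear_map (phi a)) -> (forall b, linear_map (phi^~ b)) -> 0 <= C ->
  (forall a b, `|phi a b| <= C * `|a| * `|b|) -> balanced phi ->
  exists G : M -> E, linear_map G /\ (forall m, `|G m| <= C * `|m|) /\
    forall a b, G (q (tens a b)) = phi a b.
Proof.
move=> phi_linr phi_linl C_ge0 phiC phi_bal.
have [_ [_ tens_univ]] := tens_proj.
have [q_lin [q_surj [q_ker [_ q_approx]]]] := q_quot.
have [f [[f_lin f_cont] [f_tens [fC _]]]] := tens_univ E phi C phi_linr phi_linl phiC.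
set N := closed_span _ in q_ker q_approx.
have f_N t : N t -> f t = 0.
  move=> Nt; apply: (Nt [set x | f x = 0]).
  - split; first by rewrite /= (linear_map0 f_lin).
    by move=> c x y /= fx fy; rewrite f_lin fx fy scaler0 addr0.
  - exact: closed_kernel.
  - by move=> _ [a [b [al ->]]]; rewrite /= (linear_mapB f_lin) !f_tens phi_bal subrr.
have f_wd t t' : q t = q t' -> f t = f t'.
  move=> qtt'; apply/eqP; rewrite -subr_eq0 -(linear_mapB f_lin); apply/eqP.
  by apply/f_N/q_ker; rewrite (linear_mapB q_lin) qtt' subrr.
pose lift m := proj1_sig (cid (q_surj m)).
have liftK m : q (lift m) = m := proj2_sig (cid (q_surj m)).
have C1_gt0 : 0 < C + 1 by rewrite ltr_wpDl.
exists (fun m => f (lift m)); split; [|split].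
- by move=> c m m'; rewrite -f_lin; apply: f_wd; rewrite q_lin !liftK.
- move=> m; apply/ler_addgt0Pr => e e_gt0.
  have [n [Nn n_close]] := q_approx (lift m) (e / (C + 1)) (divr_gt0 e_gt0 C1_gt0).
  rewrite -[f (lift m)]subr0 -(f_N n Nn) -(linear_mapB f_lin); apply: le_trans (fC _) _.
  rewrite liftK in n_close; apply: le_trans (ler_wpM2l C_ge0 (ltW n_close)) _.
  by rewrite mulrDr lerD2l mulrCA ler_piMr ?ltW // ltr_pdivrMr // mul1r ltrDl.
- by move=> a b; rewrite -f_tens; apply: f_wd; rewrite liftK.
Qed.

Lemma balanced_ext (E : completeNormedModType K) (g h : M -> E) :
  linear_cont g -> linear_cont h ->
  (forall a b, g (q (tens a b)) = h (q (tens a b))) -> forall m, g m = h m.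
Proof.
move=> g_lc h_lc gh m.
have [[tens_linr [tens_linl _]] [tens_le tens_univ]] := tens_proj.
have q_lc := quotient_map_cont q_quot (@closed_span0 _ _ _).
have gq_lc := linear_cont_comp q_lc g_lc; have hq_lc := linear_cont_comp q_lc h_lc.
have gq_lin : forall c t s, g (q (c *: t + s)) = c *: g (q t) + g (q s) := gq_lc.1.
have [C C_gt0 gqC] := linear_cont_bounded gq_lc.
have [|||f [_ [_ [_ f_uniq]]]] := tens_univ E (fun a b => g (q (tens a b))) C.
- by move=> a c x y; rewrite tens_linr gq_lin.
- by move=> b c x y; rewrite tens_linl gq_lin.
- move=> a b; apply: le_trans (gqC _) _; rewrite -mulrA.
  by apply: ler_wpM2l; [exact: ltW | exact: tens_le].
have [t <-] := q_quot.2.1 m.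
have gq_f := f_uniq _ gq_lc (fun a b => erefl).
have hq_f := f_uniq _ hq_lc (fun a b => esym (gh a b)).
exact: (congr1 (fun F => F t) (etrans gq_f (esym hq_f))).
Qed.

(* K^o need not be complete, so scalar-valued maps are handled through a
   nonzero vector e of a complete space E. *)
Lemma balanced_ext_scalar (E : completeNormedModType K) (e : E) (g h : M -> K^o) :
  e != 0 -> linear_cont g -> linear_cont h ->
  (forall a b, g (q (tens a b)) = h (q (tens a b))) -> forall m, g m = h m.
Proof.
move=> e_neq0 g_lc h_lc gh m.
have := balanced_ext (linear_cont_comp g_lc (linear_cont_scalev e))
  (linear_cont_comp h_lc (linear_cont_scalev e)) (fun a b => congr1 ( *:%R^~ e) (gh a b)) m.
move/eqP; rewrite -subr_eq0 -scalerBl scaler_eq0 (negbTE e_neq0) orbF subr_eq0.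
by move/eqP.
Qed.

Lemma balanced_factor_scalar (E : completeNormedModType K) (e : E) (ph : E -> K^o)
  (Cph : K) (phi : A -> A -> K^o) (C : K) :
  linear_map ph -> ph e = 1 -> 0 <= Cph -> (forall y, `|ph y| <= Cph * `|y|) ->
  (forall a, linear_map (phi a)) -> (forall b, linear_map (phi^~ b)) -> 0 <= C ->
  (forall a b, `|phi a b| <= C * `|a| * `|b|) -> balanced phi ->
  exists F : M -> K^o, linear_map F /\ (forall m, `|F m| <= Cph * `|e| * C * `|m|) /\
    forall a b, F (q (tens a b)) = phi a b.
Proof.
move=> ph_lin ph_e Cph_ge0 phC phi_linr phi_linl C_ge0 phiC phi_bal.
have [|||||G [G_lin [GC G_tens]]] :=
  @balanced_factor E (fun a b => phi a b *: e) (C * `|e|).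
- by move=> a k x y; rewrite phi_linr scalerDl scalerA.
- by move=> b k x y; rewrite /= phi_linl scalerDl scalerA.
- by rewrite mulr_ge0.
- move=> a b; rewrite normrZ.
  have -> : C * `|e| * `|a| * `|b| = C * `|a| * `|b| * `|e| by ring.
  exact: ler_wpM2r.
- by move=> a b al; rewrite phi_bal.
exists (fun m => ph (G m)); split; [|split].
- by move=> k m m'; rewrite G_lin ph_lin.
- move=> m; apply: le_trans (phC _) _.
  have -> : Cph * `|e| * C * `|m| = Cph * (C * `|e| * `|m|) by ring.
  exact: ler_wpM2l.
- by move=> a b; rewrite G_tens (linear_mapZ ph_lin) ph_e; apply: mulr1.
Qed.

End BalancedFactorization.

Section ModuleDerivations.
Variables (K : numFieldType) (U A Q X T M : completeNormedModType K).
Variables (mulU : U -> U -> U) (mulA : A -> A -> A) (aL : U -> A -> A) (aR : A -> U -> A).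
Variables (pi : A -> Q) (mulQ : Q -> Q -> Q) (qL : U -> Q -> Q) (qR : Q -> U -> Q).
Variables (xL : Q -> X -> X) (xR : X -> Q -> X) (yL : U -> X -> X) (yR : X -> U -> X).
Variables (tens : A -> A -> T) (q : T -> M) (lM rM : A -> M -> M) (om : M -> Q).
Variables (I : Type) (le : I -> I -> Prop) (u : I -> M).

Hypothesis X_mod : banach_BU_module mulU mulQ qL qR xL xR yL yR.
Hypothesis pi_lin : linear_map pi.
Hypothesis pi_surj : forall w, exists a, pi a = w.
Hypothesis pi_le : forall a, `|pi a| <= `|a|.
Hypothesis pi_mul : forall a b, pi (mulA a b) = mulQ (pi a) (pi b).
Hypothesis pi_qL : forall al a, qL al (pi a) = pi (aL al a).
Hypothesis pi_qR : forall a al, qR (pi a) al = pi (aR a al).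
Hypothesis tens_proj : is_proj_tensor tens.
Hypothesis q_quot : is_quotient_map q
  (closed_span [set t | exists a b al, t = tens (aR a al) b - tens a (aL al b)]).
Hypotheses (lM_lc : forall a, linear_cont (lM a)) (rM_lc : forall a, linear_cont (rM a)).
Hypothesis lM_tens : forall a b c, lM a (q (tens b c)) = q (tens (mulA a b) c).
Hypothesis rM_tens : forall a b c, rM a (q (tens b c)) = q (tens b (mulA c a)).
Hypothesis om_lc : linear_cont om.
Hypothesis om_tens : forall a b, om (q (tens a b)) = pi (mulA a b).
Hypothesis le_dir : directed le.
Hypothesis u_central : forall a, net_cvg le (fun j => lM a (u j) - rM a (u j)) 0.
Hypothesis om_u_unit : forall x,
  net_cvg le (fun j => xL (om (u j)) x) x /\ net_cvg le (fun j => xR x (om (u j))) x.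

Lemma derivation_factor (D : Q -> X) :
  module_derivation mulQ qL qR xL xR yL yR D ->
  exists2 G : M -> X, linear_cont G & forall b c, G (q (tens b c)) = xL (pi b) (D (pi c)).
Proof.
move=> [D_lc [_ [D_qL _]]].
have [[xL_bil _] [_ [_ [xL_yL _]]]] := X_mod.
have [CL CL_ge0 xLC] := bounded_bilinear_bound xL_bil.
have [CD CD_gt0 DC] := linear_cont_bounded D_lc.
have C_ge0 : 0 <= CL * CD by rewrite mulr_ge0 // ltW.
have [|||||G [G_lin [GC G_tens]]] := balanced_factor tens_proj q_quot
  (phi := fun b c => xL (pi b) (D (pi c))) (C := CL * CD).
- by move=> b k x y; rewrite pi_lin D_lc.1 xL_bil.1.
- by move=> c k x y; rewrite /= pi_lin; apply: xL_bil.2.1.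
- exact: C_ge0.
- move=> b c; apply: le_trans (xLC _ _) _.
  have D_le : `|D (pi c)| <= CD * `|c|.
    by apply: le_trans (DC _) _; apply: ler_wpM2l; [exact: ltW | exact: pi_le].
  have -> : CL * CD * `|b| * `|c| = CL * `|b| * (CD * `|c|) by ring.
  by apply: ler_pM; rewrite ?mulr_ge0 // ?ler_wpM2l.
- by move=> a b al; rewrite /= -pi_qR -pi_qL D_qL xL_yL.
by exists G => //; apply: (bounded_linear_cont G_lin C_ge0 GC).
Qed.

Lemma derivation_factor_commutator (D : Q -> X) (G : M -> X) :
  module_derivation mulQ qL qR xL xR yL yR D -> linear_cont G ->
  (forall b c, G (q (tens b c)) = xL (pi b) (D (pi c))) ->
  forall a m, xL (pi a) (G m) - xR (G m) (pi a) = G (lM a m - rM a m) + xL (om m) (D (pi a)).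
Proof.
move=> [_ [D_mul _]] G_lc G_tens a.
have [[xL_bil [xR_bil [xL_mul [_ xLR]]]] _] := X_mod.
apply: (balanced_ext tens_proj q_quot).
- apply: linear_contB.
    exact: linear_cont_comp G_lc (bounded_bilinear_contl _ xL_bil).
  exact: linear_cont_comp G_lc (bounded_bilinear_contr _ xR_bil).
- apply: linear_contD.
    exact: linear_cont_comp (linear_contB (lM_lc a) (rM_lc a)) G_lc.
  exact: linear_cont_comp om_lc (bounded_bilinear_contr _ xL_bil).
- move=> b c; rewrite (linear_mapB G_lc.1) lM_tens rM_tens !G_tens om_tens !pi_mul D_mul.
  by rewrite !xL_mul (linear_mapD (xL_bil.1 _)) xLR opprD addrA addrNK.
Qed.

Lemma module_derivation_approx_inner (D : Q -> X) :
  module_derivation mulQ qL qR xL xR yL yR D -> approx_inner xL xR D.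
Proof.
move=> D_der; have [G G_lc G_tens] := derivation_factor D_der.
have [CG CG_gt0 GC] := linear_cont_bounded G_lc.
exists I, le, (fun j => G (u j)); split => // w; have [a <-] := pi_surj w.
apply: (net_cvg_dominated (C := CG) (C' := 1) le_dir _ _ (u_central a)
  (om_u_unit (D (pi a))).1) => // [|j]; first exact: ltW.
rewrite (derivation_factor_commutator D_der G_lc G_tens) mul1r -addrA.
by apply: le_trans (ler_normD _ _) _; apply: lerD.
Qed.

Lemma dual_module_derivation_bilinear (D : Q -> X -> K^o) :
  dual_module_derivation mulQ qL qR xL xR yL yR D -> bounded_bilinear D.
Proof.
move=> [D_lc [D_lin [D_bd _]]]; split; first by move=> w; exact: (D_lc w).1.
by split=> // x k w w'; exact: D_lin.
Qed.

Lemma dual_derivation_factor (D : Q -> X -> K^o) (w0 : Q) (x0 : X) :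
  dual_module_derivation mulQ qL qR xL xR yL yR D -> D w0 x0 != 0 ->
  exists2 F : X -> M -> K^o, bounded_bilinear F &
    forall x b c, F x (q (tens b c)) = D (pi c) (xR x (pi b)).
Proof.
move=> D_der Dw0x0; have D_bil := dual_module_derivation_bilinear D_der.
have [D_lc [D_lin [_ [_ [D_qL _]]]]] := D_der.
have [[_ [xR_bil _]] [_ [_ [_ [_ [xR_yR _]]]]]] := X_mod.
have [CD CD_ge0 DC] := bounded_bilinear_bound D_bil.
have [CR CR_ge0 xRC] := bounded_bilinear_bound xR_bil.
have x0_neq0 := linear_map_neq0 (D_lc w0).1 Dw0x0.
pose ph x : K^o := (D w0 x0)^-1 *: D w0 x.
have ph_lc : linear_cont ph := linear_contZ _ (D_lc w0).
have [Cph Cph_gt0 phC] := linear_cont_bounded ph_lc.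
have ph_x0 : ph x0 = 1 by apply: mulVf.
have xR_linl b k x y : xR (k *: x + y) b = k *: xR x b + xR y b := xR_bil.2.1 b k x y.
have /choice [F F_spec] : forall x, exists F : M -> K^o, linear_map F /\
    (forall m, `|F m| <= Cph * `|x0| * (CD * CR * `|x|) * `|m|) /\
    forall b c, F (q (tens b c)) = D (pi c) (xR x (pi b)).
  move=> x; apply: (balanced_factor_scalar tens_proj q_quot ph_lc.1 ph_x0 (ltW Cph_gt0) phC).
  - by move=> b k c c'; rewrite pi_lin D_lin.
  - by move=> c k b b'; rewrite /= pi_lin xR_bil.1 (D_lc _).1.
  - by rewrite !mulr_ge0.
  - move=> b c; apply: le_trans (DC _ _) _.
    have xR_le : `|xR x (pi b)| <= CR * `|x| * `|b|.
      by apply: le_trans (xRC _ _) _; apply: ler_wpM2l; rewrite ?mulr_ge0.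
    have -> : CD * CR * `|x| * `|b| * `|c| = CD * `|c| * (CR * `|x| * `|b|) by ring.
    by apply: ler_pM; rewrite ?mulr_ge0 // ler_wpM2l.
  - by move=> a b al; rewrite /= -pi_qR -pi_qL D_qL xR_yR.
have F_lc x : linear_cont (F x).
  have [F_lin [FC _]] := F_spec x.
  by apply: (bounded_linear_cont F_lin _ FC); rewrite !mulr_ge0 // ltW.
exists F => [|x b c]; last exact: (F_spec x).2.2.
split; first by move=> x; exact: (F_spec x).1.
split.
  move=> m k x y; apply: (balanced_ext_scalar tens_proj q_quot x0_neq0
    (g := F (k *: x + y)) (h := fun m => k *: F x m + F y m)) => // [|b c].
    exact: linear_contD (linear_contZ _ (F_lc x)) (F_lc y).
  by rewrite !(F_spec _).2.2 xR_linl (D_lc _).1.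
exists (Cph * `|x0| * CD * CR) => x m; apply: le_trans ((F_spec x).2.1 m) _.
by rewrite !mulrA.
Qed.

Lemma dual_derivation_factor_commutator (D : Q -> X -> K^o) (F : X -> M -> K^o) (x0 : X) :
  dual_module_derivation mulQ qL qR xL xR yL yR D -> bounded_bilinear F -> x0 != 0 ->
  (forall x b c, F x (q (tens b c)) = D (pi c) (xR x (pi b))) ->
  forall a x m, F (xR x (pi a)) m - F (xL (pi a) x) m =
                F x (lM a m - rM a m) + D (pi a) (xR x (om m)).
Proof.
move=> [D_lc [_ [_ [D_mul _]]]] F_bil x0_neq0 F_tens a x.
have [[_ [xR_bil [_ [xR_mul xLR]]]] _] := X_mod.
apply: (balanced_ext_scalar tens_proj q_quot x0_neq0).
- by apply: linear_contB; exact: bounded_bilinear_contl.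
- apply: linear_contD.
    apply: linear_cont_comp (bounded_bilinear_contl _ F_bil).
    exact: linear_contB (lM_lc a) (rM_lc a).
  exact: linear_cont_comp om_lc (linear_cont_comp (bounded_bilinear_contl _ xR_bil) (D_lc _)).
- move=> b c; rewrite (linear_mapB (F_bil.1 x)) lM_tens rM_tens !F_tens om_tens !pi_mul D_mul.
  by rewrite !xR_mul -xLR opprD addrA addrNK.
Qed.

Lemma dual_module_derivation_wstar_approx_inner (D : Q -> X -> K^o) :
  dual_module_derivation mulQ qL qR xL xR yL yR D -> wstar_approx_inner xL xR D.
Proof.
move=> D_der; have D_bil := dual_module_derivation_bilinear D_der.
have [[w0 [x0 Dw0x0]] | D0] := pselect (exists w x, D w x != 0); last first.
  exists I, le, (fun _ _ => 0); split => //; split => [j | w x eps eps_gt0].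
    apply: (@bounded_linear_cont _ _ _ _ 0) => //.
      by move=> k x y; rewrite scaler0 addr0.
    by move=> x; rewrite normr0 mul0r.
  have [[i0 _] _] := le_dir; exists i0 => i _.
  have -> : D w x = 0 by apply: contra_notP D0 => Dwx; exists w, x; apply/eqP.
  by rewrite !subr0 normr0.
have [F F_bil F_tens] := dual_derivation_factor D_der Dw0x0.
have x0_neq0 := linear_map_neq0 (D_bil.1 w0) Dw0x0.
have [CF CF_ge0 FC] := bounded_bilinear_bound F_bil.
have [CD CD_ge0 DC] := bounded_bilinear_bound D_bil.
exists I, le, (fun j x => F x (u j)); split => //; split => [j | w x].
  exact: bounded_bilinear_contr.
have [a <-] := pi_surj w.
apply: (net_cvg_dominated (C := CF * `|x|) (C' := CD * `|pi a|) le_dir _ _ (u_central a)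
  (om_u_unit x).2) => [||j]; rewrite ?mulr_ge0 //.
rewrite (dual_derivation_factor_commutator D_der F_bil x0_neq0 F_tens) -addrA.
rewrite -(linear_mapB (D_bil.1 _)); apply: le_trans (ler_normD _ _) _.
by apply: lerD; [exact: FC | exact: DC].
Qed.

Lemma derivations_approx_inner :
  (forall D : Q -> X, module_derivation mulQ qL qR xL xR yL yR D -> approx_inner xL xR D) /\
  (forall D : Q -> X -> K^o, dual_module_derivation mulQ qL qR xL xR yL yR D ->
     wstar_approx_inner xL xR D).
Proof.
split=> D; first exact: module_derivation_approx_inner.
exact: dual_module_derivation_wstar_approx_inner.
Qed.

End ModuleDerivations.

Unset Implicit Arguments.

Theorem proposition3p6 (K : numFieldType)
  (U A : completeNormedModType K) (mulU : U -> U -> U) (mulA : A -> A -> A)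
  (aL : U -> A -> A) (aR : A -> U -> A)
  (Q : completeNormedModType K) (pi : A -> Q) (mulQ : Q -> Q -> Q)
  (qL : U -> Q -> Q) (qR : Q -> U -> Q)
  (X : completeNormedModType K) (xL : Q -> X -> X) (xR : X -> Q -> X)
  (yL : U -> X -> X) (yR : X -> U -> X) :
  banach_algebra mulU -> banach_algebra mulA ->
  compatible_module mulU mulA aL aR ->
  (trivial_left aL \/ trivial_right aR) ->
  (* Q = A/J with quotient map pi and the induced product and U-actions *)
  is_quotient_map pi (module_ideal mulA aL aR) ->
  (forall a b, pi (mulA a b) = mulQ (pi a) (pi b)) ->
  (forall al a, qL al (pi a) = pi (aL al a)) ->
  (forall a al, qR (pi a) al = pi (aR a al)) ->
  (* X is a commutative Banach (A/J)-U-module *)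
  banach_BU_module mulU mulQ qL qR xL xR yL yR ->
  (forall al x, yL al x = yR x al) ->
  (* every approximate identity of A/J is an approximate identity for X *)
  (forall (I : Type) (le : I -> I -> Prop) (e : I -> Q),
     directed le -> approx_identity mulQ le e ->
     forall x, net_cvg le (fun i => xL (e i) x) x /\ net_cvg le (fun i => xR x (e i)) x) ->
  module_pseudo_amenable mulA aL aR pi mulQ ->
  (forall D : Q -> X, module_derivation mulQ qL qR xL xR yL yR D -> approx_inner xL xR D) /\
  (forall D : Q -> X -> K^o, dual_module_derivation mulQ qL qR xL xR yL yR D ->
     wstar_approx_inner xL xR D).
Proof.
move=> _ _ _ _ pi_quot pi_mul pi_qL pi_qR X_mod _ X_unit
  [T [tens [M [q [lM [rM [om [tens_proj [q_quot [lM_lc [rM_lc [lM_tens [rM_tens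
  [om_lc [om_tens [I [le [u [le_dir [om_u_unit u_central]]]]]]]]]]]]]]]]]]]].
have [pi_lin [pi_surj _]] := pi_quot.
have pi_le := quotient_map_contraction pi_quot (@module_ideal0 _ _ _ mulA aL aR).
have om_u_X := X_unit I le _ le_dir om_u_unit.
exact: (derivations_approx_inner X_mod pi_lin pi_surj pi_le pi_mul pi_qL pi_qR
  tens_proj q_quot lM_lc rM_lc lM_tens rM_tens om_lc om_tens le_dir u_central om_u_X).
Qed.
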